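(* Let $(x^{(k)})_{k\in\mathbb N}$ be a sequence of nonabsorbing mixed action profiles in $X$ converging to $x$, and suppose ${\cal E}_J(x^{(k)})\ne\emptyset$ for every $k$. Then $x\in X$ and ${\cal E}_J(x)\ne\emptyset$.
   Context: $I$ is a finite set of players, $A_i$ finite nonempty action sets, $A=\prod_iA_i$, $p:A\to[0,1]$ an absorption probability function. Let $\Xi_i=\Delta(A_i)$, $\Xi=\prod_i\Xi_i$, and for $x\in\Xi$ let $p(x)=\sum_{a\in A}p(a)\prod_jx_j(a_j)$ (multilinear extension; similarly for partially pure profiles such as $(a_J,x_{-J})$). Let $B=\{a\in A:p(a)=0\}$ and let $X=\{x\in\Xi: p(x)=0\}$ be the set of nonabsorbing mixed action profiles (equivalently, mixed profiles whose support $\prod_i{\rm supp}(x_i)$ is contained in a connected component of the graph on $B$ where two profiles are adjacent iff they differ in exactly one player's action). For $x\in X$, a pair $(J,a_J)$ with $\emptyset\ne J\subseteq I$ and $a_J\in\prod_{i\in J}A_i$ is an exit at $x$ if $p(a_J,x_{-J})>0$ and $p(a_{J'},x_{-J'})=0$ for every proper subset $J'\subsetneq J$. It is a joint exit if $|J|\ge2$. ${\cal E}_J(x)$ denotes the set of joint exits at $x$. *)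

From HB Require Import structures.
From mathcomp Require Import all_boot all_order all_algebra.
From mathcomp Require Import all_classical all_reals topology normedtype sequences.
Set Implicit Arguments. Unset Strict Implicit. Unset Printing Implicit Defensive.
Import Order.TTheory GRing.Theory Num.Theory.
Local Open Scope ring_scope.

Section Game.
Variables (R : realType) (I : finType) (A : I -> finType).

Definition profile := {dffun forall i : I, A i}.

(* a mixed action profile (element of prod_i Delta(A_i) once mixed_profile holds) *)
Definition mprofile := forall i : I, A i -> R.

Definition mixed_profile (x : mprofile) : Prop :=
  forall i, (forall c, 0 <= x i c) /\ \sum_(c : A i) x i c = 1.

Definition absorption (p : profile -> R) : Prop :=
  forall a, 0 <= p a <= 1.

Definition pext (p : profile -> R) (x : mprofile) : R :=
  \sum_(a : profile) p a * \prod_(j : I) x j (a j).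

(* the partially pure profile (a_J, x_{-J}); only the coordinates of b in J matter *)
Definition mixJ (x : mprofile) (J : {set I}) (b : profile) : mprofile :=
  fun i c => if i \in J then (c == b i)%:R else x i c.

Definition nonabsorbing (p : profile -> R) (x : mprofile) : Prop :=
  mixed_profile x /\ pext p x = 0.

Definition is_exit (p : profile -> R) (x : mprofile) (J : {set I}) (b : profile) : Prop :=
  nonabsorbing p x /\ (0 < #|J|)%N /\ 0 < pext p (mixJ x J b) /\
  (forall J' : {set I}, J' \proper J -> pext p (mixJ x J' b) = 0).

(* E_J(x) <> emptyset : there is a joint exit (|J| >= 2) at x *)
Definition has_joint_exit (p : profile -> R) (x : mprofile) : Prop :=
  exists (J : {set I}) (b : profile), (2 <= #|J|)%N /\ is_exit p x J b.

End Game.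

From HB Require Import structures.
From mathcomp Require Import all_boot all_order all_algebra.
From mathcomp Require Import all_classical all_reals topology normedtype sequences.
Import Order.TTheory GRing.Theory Num.Theory numFieldNormedType.Exports.
Local Open Scope classical_set_scope.
Local Open Scope ring_scope.

(* Whether [p(z) > 0] depends only on the supports of the [z_i]: it holds iff
   some pure profile in the support of [z] is absorbing.  Along the sequence,
   the support of the limit [x] is eventually contained in that of [x^(k)].
   Fix such a [k] and a joint exit [(J, b)] at [x^(k)]; pick an absorbing
   profile [a] in the support of [(b_J, x^(k)_{-J})], and a minimal [K] with
   [p(a_K, x_{-K}) > 0], which is an exit at [x].  If [K] were a singleton
   [{i}], then [p(a_i, x^(k)_{-i}) > 0]: for [i] in [J] this contradicts the
   minimality of [J], and for [i] outside [J] it contradicts [p(x^(k)) = 0]. *)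

Section Supports.
Context {R : realType} {I : finType} {A : I -> finType} {p : profile A -> R}.
Hypothesis p_ge0 : forall a, 0 <= p a.

Definition nonneg_profile (z : mprofile R A) := forall i c, 0 <= z i c.

Definition support_sub (z w : mprofile R A) :=
  forall i c, 0 < z i c -> 0 < w i c.

Lemma mixed_profile_ge0 {z : mprofile R A} : mixed_profile z -> nonneg_profile z.
Proof. by move=> zmix i c; case: (zmix i) => ->. Qed.

Lemma pext_ge0 {z : mprofile R A} : nonneg_profile z -> 0 <= pext p z.
Proof.
move=> z_ge0; apply: sumr_ge0 => a _.
by rewrite mulr_ge0 //; apply: prodr_ge0.
Qed.

Lemma pext_gt0P {z : mprofile R A} : nonneg_profile z ->
  0 < pext p z <-> exists a, 0 < p a /\ forall j, 0 < z j (a j).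
Proof.
move=> z_ge0; have term_ge0 a : 0 <= p a * \prod_j z j (a j).
  by rewrite mulr_ge0 //; apply: prodr_ge0.
split=> [pz_gt0 | [a [pa_gt0 za_gt0]]].
  have : pext p z != 0 by rewrite gt_eqF.
  rewrite /pext psumr_neq0 => [/hasP[a _ /=] | a _]; last exact: term_ge0.
  rewrite lt_def mulf_eq0 negb_or => /andP[/andP[pa_neq0 /prodf_neq0 za_neq0] _].
  exists a; split; first by rewrite lt_def pa_neq0 p_ge0.
  by move=> j; rewrite lt_def za_neq0 ?z_ge0.
rewrite /pext (bigD1 a) //= ltr_pwDl ?sumr_ge0 //.
by rewrite mulr_gt0 //; apply: prodr_gt0.
Qed.

Lemma pext_gt0_support_sub {z w : mprofile R A} :
  nonneg_profile z -> nonneg_profile w -> support_sub z w ->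
  0 < pext p z -> 0 < pext p w.
Proof.
move=> z_ge0 w_ge0 zw /(pext_gt0P z_ge0)[a [pa za]].
by apply/(pext_gt0P w_ge0); exists a; split=> // j; apply: zw.
Qed.

Lemma pext_eq0_support_sub {z w : mprofile R A} :
  nonneg_profile z -> nonneg_profile w -> support_sub z w ->
  pext p w = 0 -> pext p z = 0.
Proof.
move=> z_ge0 w_ge0 zw pw0; apply/eqP; rewrite eq_le pext_ge0 // andbT leNgt.
by apply/negP => /(pext_gt0_support_sub z_ge0 w_ge0 zw); rewrite pw0 ltxx.
Qed.

Lemma mixJ_ge0 {z : mprofile R A} (J : {set I}) (b : profile A) :
  nonneg_profile z -> nonneg_profile (mixJ z J b).
Proof. by move=> z_ge0 i c; rewrite /mixJ; case: ifP. Qed.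

Lemma mixJ_gt0E (z : mprofile R A) (J : {set I}) (b : profile A) i (c : A i) :
  (0 < mixJ z J b c) = if i \in J then c == b i else 0 < z i c.
Proof. by rewrite /mixJ; case: ifP => // _; case: eqP; rewrite ?ltr01 ?ltxx. Qed.

Lemma mixJ_set0 (z : mprofile R A) b : mixJ z finset.set0 b = z.
Proof.
by apply: functional_extensionality_dep => i; apply: funext => c; rewrite /mixJ inE.
Qed.

Lemma mixJ_support_sub (z w : mprofile R A) (J : {set I}) (b : profile A) :
  support_sub z w -> support_sub (mixJ z J b) (mixJ w J b).
Proof. by move=> zw i c; rewrite !mixJ_gt0E; case: ifP => // _; apply: zw. Qed.

Lemma eq_mixJ (z : mprofile R A) (J : {set I}) (b b' : profile A) :
  {in J, forall i, b i = b' i} -> mixJ z J b = mixJ z J b'.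
Proof.
move=> bb'; apply: functional_extensionality_dep => i; apply: funext => c.
by rewrite /mixJ; case: ifP => // /bb' ->.
Qed.

Lemma mixJ_support_sub_self (z : mprofile R A) (J : {set I}) (b : profile A) :
  {in J, forall i, 0 < z i (b i)} -> support_sub (mixJ z J b) z.
Proof. by move=> zb i c; rewrite mixJ_gt0E; case: ifP => // /zb + /eqP ->. Qed.

Lemma exit_at_absorbing_profile {z : mprofile R A} {a : profile A} :
  nonabsorbing p z -> 0 < p a -> exists K, is_exit p z K a.
Proof.
move=> [zmix pz0] pa_gt0; have z_ge0 := mixed_profile_ge0 zmix.
pose P := fun K : {set I} => 0 < pext p (mixJ z K a).
have [K /minsetP[PK minK]] : {K | minset P K}.
  apply: ex_minset; exists [set: I]%SET; apply/(pext_gt0P (mixJ_ge0 _ _ z_ge0)).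
  by exists a; split=> // j; rewrite mixJ_gt0E inE.
exists K; split; first by split.
split.
  rewrite card_gt0; apply/negP => /eqP K0.
  by move: PK; rewrite /P K0 mixJ_set0 pz0 ltxx.
split=> // K' ltK'K; apply/eqP; rewrite eq_le (pext_ge0 (mixJ_ge0 _ _ z_ge0)) andbT leNgt.
by apply/negP => /minK/(_ (proper_sub ltK'K)) K'K; rewrite K'K fintype.properxx in ltK'K.
Qed.

Lemma joint_exit_support_sub {x y : mprofile R A} :
  nonabsorbing p x -> support_sub x y -> has_joint_exit p y -> has_joint_exit p x.
Proof.
move=> xna xy [J [b [J2 [[ymix py0] [_ [pJ_gt0 minJ]]]]]].
have x_ge0 := mixed_profile_ge0 xna.1.
have y_ge0 := mixed_profile_ge0 ymix.
have [a [pa_gt0 ya]] := (pext_gt0P (mixJ_ge0 _ _ y_ge0)).1 pJ_gt0.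
have [K exitK] := exit_at_absorbing_profile xna pa_gt0.
exists K, a; split=> //; rewrite ltnNge; apply/negP => K_le1.
case: exitK => _ [K_gt0 [pK_gt0 _]].
have /cards1P[i Ki] : #|K| == 1%N by rewrite eqn_leq K_le1.
have piy_gt0 : 0 < pext p (mixJ y [set i]%SET a).
  apply: (pext_gt0_support_sub (mixJ_ge0 _ _ x_ge0) (mixJ_ge0 _ _ y_ge0)) => //.
  - exact: mixJ_support_sub.
  - by rewrite -Ki.
have := ya i; rewrite mixJ_gt0E; case: ifP => [iJ /eqP ai | iJ yai].
  have ltiJ : [set i]%SET \proper J by rewrite properEcard finset.sub1set iJ cards1.
  have eq_ab : mixJ y [set i]%SET a = mixJ y [set i]%SET b.
    by apply: eq_mixJ => j /finset.set1P ->.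
  by rewrite eq_ab minJ ?ltxx in piy_gt0.
suff : 0 < pext p y by rewrite py0 ltxx.
apply: (pext_gt0_support_sub (mixJ_ge0 _ _ y_ge0) y_ge0 _ piy_gt0).
by apply: mixJ_support_sub_self => j /finset.set1P ->.
Qed.

End Supports.

Section Limits.
Context {R : realType} {I : finType} {A : I -> finType}.
Context {xs : nat -> mprofile R A} {x : mprofile R A}.
Hypothesis xs_cvg : forall i (c : A i), (fun k => xs k i c) @ \oo --> (x i c : R).

Lemma mixed_profile_cvg : (forall k, mixed_profile (xs k)) -> mixed_profile x.
Proof.
move=> xs_mix i; split=> [c | ].
  apply: (cvgr_to_ge (xs_cvg i c)); apply: nearW => k.
  by case: (xs_mix k i) => ->.
have sum_cvg : (fun k => \sum_c xs k i c) @ \oo --> \sum_c x i c.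
  by apply: cvg_big => [|c _]; [exact: add_continuous | exact: xs_cvg].
have sum1 : (fun k => \sum_c xs k i c) = fun=> 1.
  by apply: funext => k; case: (xs_mix k i).
by rewrite sum1 in sum_cvg; exact: (cvg_unique _ sum_cvg (cvg_cst (1 : R))).
Qed.

Lemma support_sub_cvg : \forall k \near \oo, support_sub x (xs k).
Proof.
apply: filter_forall => i; apply: filter_forall => c.
have [x_gt0 | _] := boolP (0 < x i c); last by apply: nearW => k /negP.
have xs_gt0 : \forall k \near \oo, 0 < xs k i c by exact: cvgr_gt (xs_cvg i c) _ x_gt0.
by apply: (filterS _ xs_gt0) => k xk_gt0 _.
Qed.

End Limits.

Theorem mainTheorem5 (R : realType) (I : finType) (A : I -> finType)
    (p : profile A -> R) (xs : nat -> mprofile R A) (x : mprofile R A) :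
  (forall i, (0 < #|A i|)%N) ->
  absorption p ->
  (forall k, nonabsorbing p (xs k)) ->
  (forall i (c : A i), (fun k => xs k i c) @ \oo --> (x i c : R)) ->
  (forall k, has_joint_exit p (xs k)) ->
  nonabsorbing p x /\ has_joint_exit p x.
Proof.
move=> _ p_abs xs_na xs_cvg xs_exit.
have p_ge0 a : 0 <= p a by case/andP: (p_abs a).
have x_mix : mixed_profile x by apply: mixed_profile_cvg xs_cvg _ => k; case: (xs_na k).
have [k xxk] := filter_ex (support_sub_cvg xs_cvg).
have [xk_mix pxk0] := xs_na k.
have x_na : nonabsorbing p x.
  split=> //; apply: (pext_eq0_support_sub p_ge0 _ _ xxk pxk0);
  exact: mixed_profile_ge0.
by split=> //; apply: (joint_exit_support_sub p_ge0 x_na xxk).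
Qed.
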